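(* Let $M$ be a matroid flock of rank $d$ on a finite set $E$, and let $g=g^M$. Then (1) $g(\alpha)+g(\beta)\ge g(\alpha\vee\beta)+g(\alpha\wedge\beta)$ for all $\alpha,\beta\in\mathbb{Z}^E$; and (2) $g(\alpha+\mathbf{1})=g(\alpha)+d$ for all $\alpha\in\mathbb{Z}^E$.
   Context: $\alpha\vee\beta$ and $\alpha\wedge\beta$ are the coordinatewise maximum and minimum. $e_I:=\sum_{i\in I}e_i$ ($e_i$ unit vectors), $\mathbf{1}:=e_E$. A matroid flock of rank $d$ on $E$ is a map $M$ assigning to each $\alpha\in\mathbb{Z}^E$ a matroid $M_\alpha$ on $E$ of rank $d$ with (MF1) $M_\alpha/i=M_{\alpha+e_i}\setminus i$ for all $\alpha$, $i$ (contraction, deletion); and (MF2) $M_\alpha=M_{\alpha+\mathbf{1}}$. With $r_\alpha$ the rank function of $M_\alpha$, $g^M$ is the unique function $g:\mathbb{Z}^E\to\mathbb{Z}$ with $g(0)=0$ and $g(\alpha+e_I)=g(\alpha)+r_\alpha(I)$ for all $\alpha\in\mathbb{Z}^E$, $I\subseteq E$. *)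

From mathcomp Require Import all_boot all_order all_algebra.
Set Implicit Arguments. Unset Strict Implicit. Unset Printing Implicit Defensive.
Import Order.TTheory GRing.Theory Num.Theory.
Local Open Scope ring_scope.

Record matroid (E : finType) := Matroid {
  mrank : {set E} -> nat;
  mrank_le_card : forall A, (mrank A <= #|A|)%N;
  mrank_mono : forall A B : {set E}, A \subset B -> (mrank A <= mrank B)%N;
  mrank_submod : forall A B : {set E},
    (mrank (A :|: B) + mrank (A :&: B) <= mrank A + mrank B)%N
}.

(* Rank function of the contraction M/i, on subsets A of E \ {i}. *)
Definition contract_rank (E : finType) (M : matroid E) (i : E) (A : {set E}) : nat :=
  (mrank M (A :|: [set i]) - mrank M [set i])%N.

Definition delete_rank (E : finType) (M : matroid E) (i : E) (A : {set E}) : nat :=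
  mrank M A.

Definition vec (E : finType) := E -> int.
Definition eI (E : finType) (I : {set E}) : vec E := fun x => ((x \in I) : nat)%:Z.
Definition onev (E : finType) : vec E := eI [set: E].
Definition vadd (E : finType) (a b : vec E) : vec E := fun x => a x + b x.
Definition vjoin (E : finType) (a b : vec E) : vec E := fun x => Num.max (a x) (b x).
Definition vmeet (E : finType) (a b : vec E) : vec E := fun x => Num.min (a x) (b x).
Definition vzero (E : finType) : vec E := fun _ => 0.

Definition matroid_flock (E : finType) (d : nat) (M : vec E -> matroid E) : Prop :=
  (forall a, mrank (M a) [set: E] = d) /\
  (* (MF1) M_a / i = M_{a+e_i} \ i, as matroids on E \ {i} *)
  (forall a i (A : {set E}), A \subset ~: [set i] ->
      contract_rank (M a) i A = delete_rank (M (vadd a (eI [set i]))) i A) /\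
  (forall a A, mrank (M a) A = mrank (M (vadd a (@onev E))) A).

Definition is_gM (E : finType) (M : vec E -> matroid E) (g : vec E -> int) : Prop :=
  g (@vzero E) = 0 /\
  forall a I, g (vadd a (eI I)) = g a + (mrank (M a) I)%:Z.

(* Since g (c + e_I) = g c + r_c(I), the mixed second difference of g at c in
   two distinct unit directions e_i, e_j is r_c({i}) + r_c({j}) - r_c({i, j}),
   which is nonnegative by submodularity of the rank of M_c.  Mixed second
   differences are additive in each direction, so they stay nonnegative for
   any two nonnegative directions x, y with disjoint supports.  Taking for c
   the meet of a and b, x = a - c and y = b - c gives the submodularity of g;
   part (2) is the defining recurrence with I = E, since r_a(E) = d. *)
From mathcomp Require Import all_boot all_order all_algebra.
From mathcomp Require Import zify.
From Stdlib Require Import FunctionalExtensionality.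
Import Order.TTheory GRing.Theory Num.Theory.
Local Open Scope ring_scope.

Section SubmodularityOfGM.

Variable E : finType.
Implicit Types (a b c x y : vec E) (s t : seq E).

Lemma vaddA a b c : vadd (vadd a b) c = vadd a (vadd b c).
Proof. by apply: functional_extensionality => e; rewrite /vadd addrA. Qed.

Lemma vaddC a b : vadd a b = vadd b a.
Proof. by apply: functional_extensionality => e; rewrite /vadd addrC. Qed.

Lemma vadd0 a : vadd a (@vzero E) = a.
Proof. by apply: functional_extensionality => e; rewrite /vadd addr0. Qed.

Lemma eI_setU1 (i j : E) : i != j ->
  vadd (eI [set i]) (eI [set j]) = eI [set i; j].
Proof.
move=> nij; apply: functional_extensionality => e; rewrite /vadd /eI !inE.
by case: (eqVneq e i) => [->|]; rewrite ?(negbTE nij).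
Qed.

Definition vec_of_seq s : vec E := fun e => (count_mem e s)%:Z.

Lemma vec_of_seq0 : vec_of_seq [::] = @vzero E.
Proof. by []. Qed.

Lemma vec_of_seq_cons (i : E) s :
  vec_of_seq (i :: s) = vadd (eI [set i]) (vec_of_seq s).
Proof.
apply: functional_extensionality => e.
by rewrite /vadd /vec_of_seq /eI /= in_set1 eq_sym PoszD.
Qed.

Lemma vec_of_seq_surj (n : E -> nat) : exists s, forall e, count_mem e s = n e.
Proof.
exists (flatten [seq nseq (n e) e | e <- enum E]) => e.
rewrite count_flatten -map_comp sumnE big_map big_enum /= (bigD1 e) //=.
rewrite count_nseq /= eqxx mul1n big1 ?addn0 // => k /negbTE.
by rewrite count_nseq /= eq_sym => ->.
Qed.

Lemma mrank0 (N : matroid E) : mrank N set0 = 0%N.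
Proof. by apply/eqP; rewrite -leqn0 -(cards0 E) mrank_le_card. Qed.

Definition mixed_diff (g : vec E -> int) c x y : int :=
  g (vadd c x) + g (vadd c y) - g c - g (vadd (vadd c x) y).

Lemma mixed_diffC g c x y : mixed_diff g c x y = mixed_diff g c y x.
Proof. rewrite /mixed_diff !vaddA (vaddC x y); lia. Qed.

Lemma mixed_diffDl g c x1 x2 y :
  mixed_diff g c (vadd x1 x2) y =
  mixed_diff g c x1 y + mixed_diff g (vadd c x1) x2 y.
Proof. rewrite /mixed_diff -!vaddA; lia. Qed.

Lemma mixed_diffDr g c x y1 y2 :
  mixed_diff g c x (vadd y1 y2) =
  mixed_diff g c x y1 + mixed_diff g (vadd c y1) x y2.
Proof.
by rewrite mixed_diffC mixed_diffDl (mixed_diffC _ c) (mixed_diffC _ (vadd c y1)).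
Qed.

Lemma mixed_diff0 g c x : mixed_diff g c x (@vzero E) = 0.
Proof. rewrite /mixed_diff !vadd0; lia. Qed.

Variables (M : vec E -> matroid E) (g : vec E -> int).
Hypothesis gM_step : forall a I, g (vadd a (eI I)) = g a + (mrank (M a) I)%:Z.

Lemma mixed_diff_unit_ge0 c (i j : E) : i != j ->
  0 <= mixed_diff g c (eI [set i]) (eI [set j]).
Proof.
move=> nij; rewrite /mixed_diff vaddA eI_setU1 // !gM_step.
have disj : [set i] :&: [set j] = set0.
  apply/setP => e; rewrite !inE.
  by case: (eqVneq e i) => [->|]; rewrite ?(negbTE nij).
have := mrank_submod (M c) [set i] [set j]; rewrite disj mrank0; lia.
Qed.

Lemma mixed_diff_unit_seq_ge0 c (i : E) t : i \notin t ->
  0 <= mixed_diff g c (eI [set i]) (vec_of_seq t).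
Proof.
elim: t c => [|j t IH] c; first by rewrite vec_of_seq0 mixed_diff0.
rewrite inE negb_or => /andP [nij nit].
rewrite vec_of_seq_cons mixed_diffDr.
by apply: addr_ge0; [exact: mixed_diff_unit_ge0 | exact: IH].
Qed.

Lemma mixed_diff_seq_ge0 c s t : {in s, forall i, i \notin t} ->
  0 <= mixed_diff g c (vec_of_seq s) (vec_of_seq t).
Proof.
elim: s c => [|i s IH] c st; first by rewrite mixed_diffC vec_of_seq0 mixed_diff0.
rewrite vec_of_seq_cons mixed_diffDl.
apply: addr_ge0; first exact/mixed_diff_unit_seq_ge0/st/mem_head.
by apply: IH => k ks; apply: st; rewrite inE ks orbT.
Qed.

Lemma gM_submodular a b : g (vjoin a b) + g (vmeet a b) <= g a + g b.
Proof.
have [s Hs] := vec_of_seq_surj (fun e => absz (Num.max (a e - b e) 0)).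
have [t Ht] := vec_of_seq_surj (fun e => absz (Num.max (b e - a e) 0)).
set c := vmeet a b.
have ea : a = vadd c (vec_of_seq s).
  apply: functional_extensionality => e.
  by rewrite /vadd /vec_of_seq Hs /c /vmeet; lia.
have eb : b = vadd c (vec_of_seq t).
  apply: functional_extensionality => e.
  by rewrite /vadd /vec_of_seq Ht /c /vmeet; lia.
have ej : vjoin a b = vadd (vadd c (vec_of_seq s)) (vec_of_seq t).
  apply: functional_extensionality => e.
  by rewrite /vadd /vec_of_seq Hs Ht /c /vmeet /vjoin; lia.
have disj : {in s, forall i, i \notin t}.
  move=> i si; rewrite -has_pred1 has_count Ht -leqNgt leqn0.
  by move: si; rewrite -has_pred1 has_count Hs; lia.
have := mixed_diff_seq_ge0 c _ _ disj.
rewrite /mixed_diff -ej -ea -eb; lia.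
Qed.

End SubmodularityOfGM.

Theorem mainTheorem12 (E : finType) (d : nat) (M : vec E -> matroid E)
  (g : vec E -> int) :
  matroid_flock d M -> is_gM M g ->
  (forall a b : vec E, g a + g b >= g (vjoin a b) + g (vmeet a b)) /\
  (forall a : vec E, g (vadd a (@onev E)) = g a + d%:Z).
Proof.
move=> [rank_d _] [_ gM_step]; split.
- exact: gM_submodular gM_step.
- by move=> a; rewrite /onev gM_step rank_d.
Qed.
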